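(* Let $\zeta\in\mathbb{C}$ with $|\zeta|<1$, and let $\alpha_0=\zeta$ and $\alpha_j=0$ for $j\ge1$ (Bernstein–Szegő polynomials). Then for nonnegative integers $n,m,r,s$, \[ \mu_{n,m}=\begin{cases}\delta_{n,m}&\text{if } n\le m,\\ \zeta^{n-m}&\text{if } n>m,\end{cases}\qquad \mu_{n,r,s}=\begin{cases}\mu_{n,s}&\text{if } r=0,\\ \delta_{s,n+r}&\text{if } r>0.\end{cases} \]
   Context: For a polynomial $f(z)=\sum_{k=0}^n a_kz^k$ of degree $n$, write $\overline{f}(z)=\sum_k\overline{a_k}z^k$ and $f^*(z)=z^n\overline{f}(1/z)$. Given $(\alpha_n)$ with $|\alpha_n|<1$, define monic $\Phi_n$ by $\Phi_0=1$, $\Phi_{n+1}(z)=z\Phi_n(z)-\overline{\alpha_n}\Phi_n^*(z)$. Let $\mathcal{L}$ be the unique linear functional on Laurent polynomials with $\mathcal{L}(1)=1$ and $\mathcal{L}(\Phi_m(z)\overline{\Phi_n}(1/z))=0$ for $m\neq n$; set $\langle f,g\rangle=\mathcal{L}(f(z)\overline{g}(1/z))$, $\mu_{n,r,s}=\langle\Phi_s(z),z^n\Phi_r(z)\rangle/\langle\Phi_s,\Phi_s\rangle$ and $\mu_{n,m}=\mu_{n,0,m}$. *)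

From HB Require Import structures.
From mathcomp Require Import all_boot all_order all_algebra.
From mathcomp Require Import complex.
From mathcomp Require Import reals.
Set Implicit Arguments. Unset Strict Implicit. Unset Printing Implicit Defensive.
Import Order.TTheory GRing.Theory Num.Theory.
Local Open Scope ring_scope.

Section OPUC.
Variable C : numClosedFieldType.

Definition polyconj (p : {poly C}) : {poly C} := map_poly Num.conj p.

(* f^*(z) = z^n \overline{f}(1/z), n = deg f *)
Definition polystar (p : {poly C}) : {poly C} :=
  \poly_(k < size p) (p`_((size p).-1 - k))^*.

Fixpoint Phi (alpha : nat -> C) (n : nat) : {poly C} :=
  match n with
  | 0 => 1
  | n'.+1 => 'X * Phi alpha n' - (alpha n')^* *: polystar (Phi alpha n')
  end.

(* A linear functional L on Laurent polynomials is given by its moments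
   c k = L(z^k), k : int.  Then
   <f,g> = L(f(z) \overline{g}(1/z)) = sum_{i,j} f_i conj(g_j) c (i - j). *)
Definition inner (c : int -> C) (f g : {poly C}) : C :=
  \sum_(i < size f) \sum_(j < size g) f`_i * (g`_j)^* * c (i%:Z - j%:Z).

Definition mu (alpha : nat -> C) (c : int -> C) (n r s : nat) : C :=
  inner c (Phi alpha s) ('X^n * Phi alpha r) / inner c (Phi alpha s) (Phi alpha s).

Definition is_OPUC_functional (alpha : nat -> C) (c : int -> C) : Prop :=
  c 0 = 1 /\ forall m n : nat, m <> n -> inner c (Phi alpha m) (Phi alpha n) = 0.

End OPUC.

From HB Require Import structures.
From mathcomp Require Import all_boot all_order all_algebra.
From mathcomp Require Import complex.
From mathcomp Require Import reals zify.
Set Implicit Arguments. Unset Strict Implicit. Unset Printing Implicit Defensive.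
Import Order.TTheory GRing.Theory Num.Theory.
Local Open Scope ring_scope.

(* For the Bernstein-Szego parameters, Phi_(m+1) = z^m (z - conj zeta).
   Orthogonality of Phi_(m+1) to Phi_0 = 1 then forces the moments
   L(z^k) = conj zeta ^ k and L(z^-k) = zeta ^ k, so every inner product is
   explicit; in particular <Phi_(s+1), Phi_(s+1)> = 1 - |zeta|^2 <> 0.  For
   r > 0, z^n Phi_r = Phi_(n+r), and orthogonality gives the Kronecker delta. *)

Section Sesquilinear.
Variables (C : numClosedFieldType) (c : int -> C).

Lemma inner_widen (f g : {poly C}) (N M : nat) :
  (size f <= N)%N -> (size g <= M)%N ->
  inner c f g = \sum_(i < N) \sum_(j < M) f`_i * (g`_j)^* * c (i%:Z - j%:Z).
Proof.
move=> leN leM; rewrite /inner (big_ord_widen N (fun i =>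
  \sum_(j < size g) f`_i * (g`_j)^* * c (i%:Z - j%:Z))) // big_mkcond.
apply: eq_bigr => i _; case: ifP => ltif.
  rewrite (big_ord_widen M (fun j => f`_i * (g`_j)^* * c (i%:Z - j%:Z))) //.
  rewrite big_mkcond; apply: eq_bigr => j _; case: ifP => // /negbT.
  by rewrite -leqNgt => /(nth_default 0) ->; rewrite conjC0 mulr0 mul0r.
by rewrite big1 // => j _; rewrite nth_default ?mul0r // leqNgt ltif.
Qed.

Lemma innerDl (f g h : {poly C}) : inner c (f + g) h = inner c f h + inner c g h.
Proof.
rewrite !(@inner_widen _ _ (maxn (size f) (size g)) (size h))
  ?leq_maxl ?leq_maxr ?size_polyD // -big_split.
by apply: eq_bigr => i _; rewrite -big_split; apply: eq_bigr => j _; rewrite coefD !mulrDl.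
Qed.

Lemma innerZl (a : C) (f h : {poly C}) : inner c (a *: f) h = a * inner c f h.
Proof.
rewrite !(@inner_widen _ _ (size f) (size h)) ?size_scale_leq // mulr_sumr.
by apply: eq_bigr => i _; rewrite mulr_sumr; apply: eq_bigr => j _; rewrite coefZ !mulrA.
Qed.

Lemma innerBl (f g h : {poly C}) : inner c (f - g) h = inner c f h - inner c g h.
Proof. by rewrite -scaleN1r innerDl innerZl mulN1r. Qed.

Lemma innerDr (f g h : {poly C}) : inner c h (f + g) = inner c h f + inner c h g.
Proof.
rewrite !(@inner_widen _ _ (size h) (maxn (size f) (size g)))
  ?leq_maxl ?leq_maxr ?size_polyD // -big_split.
apply: eq_bigr => i _; rewrite -big_split; apply: eq_bigr => j _.
by rewrite coefD rmorphD /= !mulrDr !mulrDl.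
Qed.

Lemma innerZr (a : C) (f h : {poly C}) : inner c h (a *: f) = a^* * inner c h f.
Proof.
rewrite !(@inner_widen _ _ (size h) (size f)) ?size_scale_leq // mulr_sumr.
apply: eq_bigr => i _; rewrite mulr_sumr; apply: eq_bigr => j _.
by rewrite coefZ rmorphM /= !mulrA [h`_i * _]mulrC.
Qed.

Lemma innerBr (f g h : {poly C}) : inner c h (f - g) = inner c h f - inner c h g.
Proof. by rewrite -scaleN1r innerDr innerZr rmorphN1 mulN1r. Qed.

Lemma innerXnXn (i j : nat) : inner c 'X^i 'X^j = c (i%:Z - j%:Z).
Proof.
rewrite (@inner_widen _ _ i.+1 j.+1) ?size_polyXn // big_ord_recr big1 /=.
  rewrite add0r big_ord_recr big1 /=; first by rewrite !coefXn !eqxx conjC1 !mul1r add0r.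
  by move=> l _; rewrite [X in X^*]coefXn (ltn_eqF (ltn_ord l)) conjC0 mulr0 mul0r.
move=> k _; rewrite big1 // => l _.
by rewrite coefXn (ltn_eqF (ltn_ord k)) !mul0r.
Qed.

End Sesquilinear.

Lemma polystar1 (C : numClosedFieldType) : polystar (1 : {poly C}) = 1.
Proof.
apply/polyP => i; rewrite coef_poly size_poly1 coefC.
by case: i => [|i] //=; rewrite ?coefC /= ?conjC1.
Qed.

Lemma Phi1 (C : numClosedFieldType) (alpha : nat -> C) :
  Phi alpha 1 = 'X - (alpha 0%N)^* *: 1.
Proof. by rewrite /= polystar1 mulr1. Qed.

Lemma Phi_S_alpha0 (C : numClosedFieldType) (alpha : nat -> C) (n : nat) :
  alpha n = 0 -> Phi alpha n.+1 = 'X * Phi alpha n.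
Proof. by move=> /= ->; rewrite conjC0 scale0r subr0. Qed.

Lemma normC_lt1_subr_conjM_neq0 (C : numClosedFieldType) (z : C) :
  `|z| < 1 -> 1 - z^* * z != 0.
Proof.
move=> ltz1; rewrite subr_eq0 mulrC -normCK eq_sym.
by apply: contraTneq (exprn_ilt1 2 (normr_ge0 z) ltz1) => ->; rewrite ltxx.
Qed.

Section BernsteinSzego.
Variables (C : numClosedFieldType) (zeta : C).

Definition bs_alpha (j : nat) : C := if j == 0%N then zeta else 0.

Local Notation Phi_bs := (Phi bs_alpha).

Lemma Phi_bs0 : Phi_bs 0 = 'X^0.
Proof. by rewrite expr0. Qed.

Lemma Phi_bsS (m : nat) : Phi_bs m.+1 = 'X^(m.+1) - zeta^* *: 'X^m.
Proof.
elim: m => [|m IHm]; first by rewrite Phi1 expr1 expr0.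
by rewrite Phi_S_alpha0 // IHm mulrBr -exprS -scalerAr -exprS.
Qed.

Lemma mulXn_Phi_bsS (n r : nat) : 'X^n * Phi_bs r.+1 = Phi_bs (n + r).+1.
Proof. by rewrite !Phi_bsS mulrBr -scalerAr -!exprD addnS. Qed.

Variable c : int -> C.
Hypothesis hL : is_OPUC_functional bs_alpha c.

Lemma bs_moment_pos (k : nat) : c k%:Z = zeta^* ^+ k.
Proof.
case: hL => c0 orth; elim: k => [|k IHk]; first by rewrite c0 expr0.
have /eqP := orth k.+1 0%N (PeanoNat.Nat.neq_succ_0 k).
rewrite Phi_bsS Phi_bs0 innerBl innerZl !innerXnXn !subr0 IHk.
by rewrite subr_eq0 -exprS => /eqP.
Qed.

Lemma bs_moment_neg (k : nat) : c (- k%:Z) = zeta ^+ k.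
Proof.
case: hL => c0 orth; elim: k => [|k IHk]; first by rewrite oppr0 c0 expr0.
have /eqP := orth 0%N k.+1 (PeanoNat.Nat.neq_0_succ k).
rewrite Phi_bsS Phi_bs0 innerBr innerZr !innerXnXn !sub0r IHk conjCK.
by rewrite subr_eq0 -exprS => /eqP.
Qed.

Lemma bs_moment (i j : nat) :
  c (i%:Z - j%:Z) = if (j <= i)%N then zeta^* ^+ (i - j) else zeta ^+ (j - i).
Proof.
case: leqP => [leji | /ltnW leij]; first by rewrite subzn // bs_moment_pos.
by rewrite -opprB subzn // bs_moment_neg.
Qed.

Lemma inner_Phi_bs0 : inner c (Phi_bs 0) (Phi_bs 0) = 1.
Proof. by rewrite Phi_bs0 innerXnXn; case: hL. Qed.

Lemma inner_Phi_bsS (s : nat) :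
  inner c (Phi_bs s.+1) (Phi_bs s.+1) = 1 - zeta^* * zeta.
Proof.
rewrite Phi_bsS innerBl !innerBr !innerZl !innerZr !innerXnXn !bs_moment conjCK.
rewrite ltnSn leqnSn ltnn leqnn !subnn subSnn !expr0 !expr1 mulr1.
by rewrite subrr subr0 mulrC.
Qed.

Lemma inner_Phi_bsS_Xn (m n : nat) :
  inner c (Phi_bs m.+1) 'X^n =
  if (n <= m)%N then 0 else zeta ^+ (n - m.+1) * (1 - zeta^* * zeta).
Proof.
rewrite Phi_bsS innerBl innerZl !innerXnXn !bs_moment.
case: (ltngtP n m.+1) => [lenm | ltmn | ->].
- by rewrite -ltnS lenm subSn // exprS subrr.
- rewrite leqNgt (ltnW ltmn) /=.
  have -> : (n - m = (n - m.+1).+1)%N by lia.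
  by rewrite exprSr mulrBr mulr1 mulrCA mulrA.
- by rewrite ltnn subnn subSnn expr0 expr1 mul1r.
Qed.

Hypothesis hz : `|zeta| < 1.

Lemma mu_bs_0 (n m : nat) :
  mu bs_alpha c n 0 m = if (n <= m)%N then (n == m)%:R else zeta ^+ (n - m).
Proof.
rewrite /mu; case: m => [|m].
  by rewrite inner_Phi_bs0 divr1 Phi_bs0 -exprD addn0 innerXnXn bs_moment; case: n.
rewrite Phi_bs0 -exprD addn0 inner_Phi_bsS_Xn inner_Phi_bsS.
have gap_neq0 := normC_lt1_subr_conjM_neq0 hz.
case: (ltngtP n m.+1) => [lenm | ltmn | ->].
- by rewrite -ltnS lenm mul0r.
- by rewrite leqNgt (ltnW ltmn) /= mulfK.
- by rewrite ltnn subnn expr0 mul1r divff.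
Qed.

Lemma mu_bs_S (n r s : nat) : mu bs_alpha c n r.+1 s = (s == n + r.+1)%N%:R.
Proof.
rewrite /mu mulXn_Phi_bsS -addnS; case: eqVneq => [-> | neq_s].
  by rewrite addnS inner_Phi_bsS divff // normC_lt1_subr_conjM_neq0.
by case: hL => _ orth; rewrite orth ?mul0r //; apply/eqP.
Qed.

End BernsteinSzego.

Local Open Scope complex_scope.

Theorem proposition4p4 (R : realType) (zeta : R[i]) (hz : `|zeta| < 1)
  (c : int -> R[i])
  (hL : is_OPUC_functional (fun j : nat => if j == 0%N then zeta else 0) c) :
  forall n m r s : nat,
    mu (fun j : nat => if j == 0%N then zeta else 0) c n 0 m
      = (if (n <= m)%N then (n == m)%:R else zeta ^+ (n - m))
    /\ mu (fun j : nat => if j == 0%N then zeta else 0) c n r s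
      = (if r == 0%N then mu (fun j : nat => if j == 0%N then zeta else 0) c n 0 s
         else (s == n + r)%N%:R).
Proof.
move=> n m r s; split; first exact: (mu_bs_0 (zeta := zeta) hL hz).
by case: r => [|r] //; exact: (mu_bs_S (zeta := zeta) hL hz).
Qed.
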